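(* Let $p$ be an odd prime, $\gamma>0$, $H\in\mathbb{Z}_p^{l\times n}$ and $c\in\mathbb{Z}_p^l$ independent and uniform, $\Lambda_o=\gamma(\{v\in\mathbb{Z}_p^n:Hv=c\}-\frac{p-1}{2})$, and $S'=[-\frac{\gamma p}{2},\frac{\gamma p}{2}]^n\cap\gamma\mathbb{Z}^n$. Let $(X,\hat U)$ be jointly distributed, with $\hat U$ taking values in $\gamma(\{0,\dots,p-1\}-\frac{p-1}{2})$, fix $\epsilon>0$ and $x\in\mathbb{R}^n$, and let $\theta(x)=\sum_{u\in\Lambda_o}\mathbb{1}\{u\in A_\epsilon^n(\hat U|x)\}$. Let $Z^n$ be uniform on $S'$. Then $$\Big(1-\frac1{p^{n-l}}\Big)p^{n-l}\Pr\big(Z^n\in A_\epsilon^n(\hat U|x)\big)\le\mathbb{E}\{\theta(x)\}\le p^{n-l}\Pr\big(Z^n\in A_\epsilon^n(\hat U|x)\big)+\frac{2^l}{p^{n(l-1)}}.$$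
   Context: Weak* typicality: the Prokhorov distance is $\pi_d(P_1,P_2)=\inf\{\epsilon>0:P_1(A)<P_2(A^\epsilon)+\epsilon\text{ and }P_2(A)<P_1(A^\epsilon)+\epsilon\ \forall\text{ Borel }A\subseteq\mathbb{R}^d\}$, $A^\epsilon=\{z:\exists y\in A,\|z-y\|<\epsilon\}$. The joint empirical measure of $(x,u)\in\mathbb{R}^n\times\mathbb{R}^n$ is $\bar P_{xu}(A\times B)=\frac1n\sum_i\mathbb{1}\{x_i\in A,u_i\in B\}$, and $A_\epsilon^n(\hat U|x)=\{u\in\mathbb{R}^n:\pi_2(\bar P_{xu},P_{X\hat U})<\epsilon\}$. Elements of $\mathbb{Z}_p$ are identified with $\{0,\dots,p-1\}$. *)

From mathcomp Require Import all_boot all_algebra.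
From Stdlib Require Import Reals ClassicalEpsilon ClassicalDescription List.

Unset Printing Implicit Defensive.

Local Open Scope R_scope.

(* Infimum of a set of reals (taken as - sup of the negated set;
   arbitrary value if the set is empty or unbounded below). *)
Definition Rinf (S : R -> Prop) : R :=
  epsilon (inhabits 0) (fun m => is_lub (fun y => S (- y)) (- m)).

(* Cardinality of a finite subset of an arbitrary type (arbitrary if infinite). *)
Definition card_set (T : Type) (S : T -> Prop) : nat :=
  epsilon (inhabits 0%nat)
    (fun k => exists l : list T, NoDup l /\ (forall z, S z <-> In z l) /\ length l = k).

Arguments card_set {T} S.

Definition ind (P : Prop) : R :=
  if excluded_middle_informative P then 1 else 0.

Definition fsum (T : finType) (f : T -> R) : R := \big[Rplus/0]_(t : T) f t.

Arguments fsum {T} f.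

Definition R2 := (R * R)%type.

Definition dist2 (z y : R2) : R :=
  sqrt ((fst z - fst y) * (fst z - fst y) + (snd z - snd y) * (snd z - snd y)).

Definition open2 (A : R2 -> Prop) : Prop :=
  forall z, A z -> exists r, 0 < r /\ forall w, dist2 w z < r -> A w.

Inductive borel2 : (R2 -> Prop) -> Prop :=
  | borel2_open : forall A, open2 A -> borel2 A
  | borel2_compl : forall A, borel2 A -> borel2 (fun z => ~ A z)
  | borel2_cunion : forall F : nat -> R2 -> Prop,
      (forall k, borel2 (F k)) -> borel2 (fun z => exists k, F k z).

(* P is a (Borel) probability measure on R^2 (only its values on Borel sets matter). *)
Definition prob_measure2 (P : (R2 -> Prop) -> R) : Prop :=
  P (fun _ => True) = 1 /\
  (forall A, borel2 A -> 0 <= P A) /\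
  (forall F : nat -> R2 -> Prop,
      (forall k, borel2 (F k)) ->
      (forall i j z, i <> j -> F i z -> F j z -> False) ->
      infinite_sum (fun k => P (F k)) (P (fun z => exists k, F k z))).

Definition nbhd2 (A : R2 -> Prop) (eps : R) : R2 -> Prop :=
  fun z => exists y, A y /\ dist2 z y < eps.

Definition prokhorov2 (P1 P2 : (R2 -> Prop) -> R) : R :=
  Rinf (fun eps => 0 < eps /\
     forall A, borel2 A ->
       P1 A < P2 (nbhd2 A eps) + eps /\ P2 A < P1 (nbhd2 A eps) + eps).

Definition emp_meas (n : nat) (x u : 'I_n -> R) (A : R2 -> Prop) : R :=
  / INR n * fsum (fun i : 'I_n => ind (A (x i, u i))).

Definition typset (n : nat) (P : (R2 -> Prop) -> R) (eps : R) (x : 'I_n -> R)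
  : ('I_n -> R) -> Prop :=
  fun u => prokhorov2 (emp_meas n x u) P < eps.

(* Lambda_o = gamma ({v in Z_p^n : H v = c} - (p-1)/2), elements of Z_p
   identified with {0,...,p-1}. *)
Definition Lambda_o (p l n : nat) (gamma : R) (H : 'M['Z_p]_(l, n)) (c : 'cV['Z_p]_l)
  : ('I_n -> R) -> Prop :=
  fun u => exists v : 'cV['Z_p]_n, mulmx H v = c /\
     forall i, u i = gamma * (INR (nat_of_ord (v i ord0)) - (INR p - 1) / 2).

Definition theta (p l n : nat) (gamma : R) (H : 'M['Z_p]_(l, n)) (c : 'cV['Z_p]_l)
  (A : ('I_n -> R) -> Prop) : R :=
  INR (card_set (fun u => Lambda_o p l n gamma H c u /\ A u)).

Definition E_theta (p l n : nat) (gamma : R) (A : ('I_n -> R) -> Prop) : R :=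
  / INR #|{: 'M['Z_p]_(l, n) * 'cV['Z_p]_l}| *
  fsum (fun Hc : 'M['Z_p]_(l, n) * 'cV['Z_p]_l => theta p l n gamma Hc.1 Hc.2 A).

Definition Sprime (p n : nat) (gamma : R) : ('I_n -> R) -> Prop :=
  fun z => forall i, (exists k : Z, z i = gamma * IZR k) /\
     - (gamma * INR p / 2) <= z i <= gamma * INR p / 2.

Definition Pr_unif_Sprime (p n : nat) (gamma : R) (A : ('I_n -> R) -> Prop) : R :=
  INR (card_set (fun z => Sprime p n gamma z /\ A z)) / INR (card_set (Sprime p n gamma)).

From mathcomp Require Import all_boot all_algebra.
From Stdlib Require Import Reals ZArith.
From Stdlib Require Import FinFun FunctionalExtensionality ClassicalEpsilon Lra Lia.
From Stdlib Require List.
From mathcomp Require Import zify.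
Local Open Scope R_scope.

(* Both bounds follow from the exact identity
     E{theta(x)} = p^(n-l) * Pr(Z^n in A),
   valid for ANY set A of points of R^n.  Write  embed v = gamma (v - (p-1)/2)  for v in Z_p^n.  Then
   - embed is injective and, p being odd, its image is exactly S', so
     Pr(Z^n in A) = #Q / p^n  with  Q = {v | embed v in A};
   - theta(x) for the pair (H, c) counts the v in Q with H v = c, and
     summing over all pairs (H, c), each v is counted once per matrix H,
     so E{theta(x)} = #Q * #matrices / (#matrices * p^l) = #Q / p^l.
   Given the identity, the lower bound is (p^(n-l) - 1) Pr <= p^(n-l) Pr and
   the upper bound only adds a nonnegative term. *)

Lemma In_mem (T : eqType) (x : T) (s : seq T) : List.In x s <-> x \in s.
Proof.
elim: s => [|y s IH] /=; first by split.
rewrite in_cons; split.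
- by case=> [->|/IH ->]; rewrite ?eqxx ?orbT.
- by case/orP=> [/eqP ->|/IH]; [left|right].
Qed.

Lemma uniq_NoDup (T : eqType) (s : seq T) : uniq s -> List.NoDup s.
Proof.
elim: s => [|y s IH] /=; first by constructor.
case/andP=> y_notin s_uniq; constructor; last exact: IH.
by move/In_mem; rewrite (negbTE y_notin).
Qed.

Lemma card_set_list (X : Type) (S : X -> Prop) (s : list X) :
  List.NoDup s -> (forall z, S z <-> List.In z s) -> card_set S = length s.
Proof.
move=> s_nodup S_s; rewrite /card_set.
have ex_enum : exists k, exists s0 : list X,
    List.NoDup s0 /\ (forall z, S z <-> List.In z s0) /\ length s0 = k.
  by exists (length s), s.
case: (epsilon_spec (inhabits 0%nat) _ ex_enum) => s0 [s0_nodup [S_s0 <-]].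
apply/eqP; rewrite eqn_leq; apply/andP; split; apply/leP;
  apply: List.NoDup_incl_length => // z Hz; [apply/S_s/S_s0|apply/S_s0/S_s] => //.
Qed.

Lemma card_set_image (T : finType) (X : Type) (f : T -> X) (Q : pred T)
    (S : X -> Prop) :
  injective f -> (forall z, S z <-> exists2 t, Q t & z = f t) -> card_set S = #|Q|.
Proof.
move=> f_inj S_img; rewrite (@card_set_list X S (List.map f (enum Q))).
- by rewrite cardE List.length_map.
- exact/(Injective_map_NoDup f_inj)/uniq_NoDup/enum_uniq.
- move=> z; rewrite S_img; split.
  + by case=> t Qt ->; apply/List.in_map/In_mem; rewrite mem_enum.
  + by case/List.in_map_iff=> t [<- /In_mem]; rewrite mem_enum; exists t.
Qed.
Arguments card_set_image {T X f Q S}.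

Definition holds (P : Prop) : bool :=
  if excluded_middle_informative P then true else false.

Lemma holdsP (P : Prop) : holds P <-> P.
Proof. by rewrite /holds; case: excluded_middle_informative. Qed.

(* The embedding v |-> gamma (v - (p-1)/2) of Z_p^n into R^n, elements of
   Z_p being read as integers in {0, ..., p-1}; Lambda_o is its image on
   the solutions of H v = c. *)
Definition embed (p n : nat) (gamma : R) (v : 'cV['Z_p]_n) : 'I_n -> R :=
  fun i => gamma * (INR (v i ord0) - (INR p - 1) / 2).

Section Column.
Local Open Scope ring_scope.
Definition column (T : Type) (n : nat) (f : 'I_n -> T) : 'cV[T]_n := \col_i f i.
#[global] Arguments column {T n} f.
Lemma columnE (T : Type) (n : nat) (f : 'I_n -> T) i j : column f i j = f i.
Proof. by rewrite mxE. Qed.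
End Column.

Lemma embed_inj (p n : nat) (gamma : R) : 0 < gamma -> injective (embed p n gamma).
Proof.
move=> gamma_gt0 v w; rewrite /embed => vw; apply/matrixP => i j.
have -> : j = ord0 by apply/val_inj; case: j => [[]].
apply/val_inj/INR_eq => /=.
have := Rmult_eq_reg_l _ _ _ (congr1 (fun f => f i) vw) (Rgt_not_eq _ _ gamma_gt0).
lra.
Qed.

Lemma Lambda_oE (p l n : nat) (gamma : R) (H : 'M['Z_p]_(l, n)) (c : 'cV['Z_p]_l)
    (A : ('I_n -> R) -> Prop) (u : 'I_n -> R) :
  Lambda_o p l n gamma H c u /\ A u <->
  exists2 v, (mulmx H v == c) && holds (A (embed p n gamma v)) & u = embed p n gamma v.
Proof.
split.
- case=> [[v [Hv u_v]] Au].
  have u_embed : u = embed p n gamma v by apply: functional_extensionality.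
  by exists v => //; rewrite Hv eqxx /=; apply/holdsP; rewrite -u_embed.
- case=> v /andP[/eqP Hv /holdsP Av] ->; split => //; by exists v.
Qed.

(* Write the odd prime p as 2m+1; the centring offset (p-1)/2 is then m. *)
Lemma odd_prime_half (p : nat) : prime p -> p <> 2%nat -> exists m, p = (2 * m + 1)%nat.
Proof.
move=> p_prime p_neq2; case: (even_prime p_prime) => // p_odd; exists p./2.
have := odd_double_half p; rewrite p_odd -mul2n; lia.
Qed.

Section Sprime.
Variables (p n m : nat) (gamma : R).
Hypotheses (gamma_gt0 : 0 < gamma) (p_gt1 : (1 < p)%nat) (p_odd : p = (2 * m + 1)%nat).

Let pR : INR p = 2 * INR m + 1.
Proof. by rewrite p_odd plus_INR mult_INR /=; lra. Qed.

Let half_pR : (INR p - 1) / 2 = INR m.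
Proof. rewrite pR; field. Qed.

Lemma embed_Sprime (v : 'cV['Z_p]_n) : Sprime p n gamma (embed p n gamma v).
Proof.
move=> i; rewrite /embed half_pR.
have vi_lt : (v i ord0 < p)%nat by apply: leq_trans (ltn_ord _) _; rewrite Zp_cast.
split.
- by exists (Z.of_nat (v i ord0) - Z.of_nat m)%Z; rewrite minus_IZR -!INR_IZR_INZ.
- have vi_le : INR (v i ord0) <= 2 * INR m.
    have : (v i ord0 <= 2 * m)%coq_nat by move/ltP: vi_lt; lia.
    by move/le_INR; rewrite mult_INR.
  have := pos_INR (v i ord0); rewrite pR; split; nra.
Qed.

Lemma grid_coord_bound (k : Z) :
  - (gamma * INR p / 2) <= gamma * IZR k <= gamma * INR p / 2 ->
  (- Z.of_nat m <= k <= Z.of_nat m)%Z.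
Proof.
rewrite pR; case=> lo hi.
have k_lt : IZR k < IZR (Z.of_nat m + 1).
  rewrite plus_IZR -INR_IZR_INZ; apply: (Rmult_lt_reg_l gamma) => //; lra.
have k_gt : IZR (- Z.of_nat m - 1) < IZR k.
  rewrite minus_IZR opp_IZR -INR_IZR_INZ; apply: (Rmult_lt_reg_l gamma) => //; lra.
have := lt_IZR _ _ k_lt; have := lt_IZR _ _ k_gt; lia.
Qed.

Lemma Sprime_embed (z : 'I_n -> R) :
  Sprime p n gamma z -> exists v, z = embed p n gamma v.
Proof.
move=> Sz.
pose k i := epsilon (inhabits 0%Z) (fun k => z i = gamma * IZR k).
have zk i : z i = gamma * IZR (k i).
  by case: (Sz i) => zi_grid _; apply: (epsilon_spec (inhabits 0%Z) _ zi_grid).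
have k_bound i : (- Z.of_nat m <= k i <= Z.of_nat m)%Z.
  by apply: grid_coord_bound; rewrite -zk; case: (Sz i).
pose digit i : 'Z_p := inord (Z.to_nat (k i + Z.of_nat m)).
exists (column digit).
apply: functional_extensionality => i; rewrite /embed columnE inordK.
- rewrite half_pR INR_IZR_INZ Z2Nat.id; last by have := k_bound i; lia.
  by rewrite plus_IZR -INR_IZR_INZ zk; ring.
- rewrite Zp_cast //; apply/ltP; have := k_bound i; lia.
Qed.

Lemma SprimeE (z : 'I_n -> R) : Sprime p n gamma z <-> exists v, z = embed p n gamma v.
Proof. by split=> [/Sprime_embed|[v ->]] //; apply: embed_Sprime. Qed.

End Sprime.

(* For any map f : M -> V -> C, summing over all pairs (a, c) the number of
   v in Q with f a v = c counts every v in Q exactly once per a. *)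
Lemma sum_card_fibres (M V C : finType) (f : M -> V -> C) (Q : pred V) :
  (\sum_(ac : M * C) #|[pred v | (f ac.1 v == ac.2) && Q v]|)%nat = (#|Q| * #|M|)%nat.
Proof.
transitivity (\sum_(ac : M * C) \sum_(v | Q v) nat_of_bool (f ac.1 v == ac.2))%nat.
  apply: eq_bigr => ac _; rewrite -sum1_card big_mkcondl /=.
  by apply: eq_bigr => v _; case: (_ == _).
rewrite exchange_big /= -sum_nat_const; apply: eq_bigr => v _.
rewrite -(pair_big xpredT xpredT (fun a c => nat_of_bool (f a v == c))) /=.
rewrite -sum1_card; apply: eq_bigr => a _.
by rewrite (bigD1 (f a v)) //= eqxx big1 // => c /negbTE; rewrite eq_sym => ->.
Qed.

Lemma expn_pow (a k : nat) : expn a k = Nat.pow a k.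
Proof. by elim: k => [|k IH] //=; rewrite expnS IH. Qed.

Lemma card_Zp_cV (p k : nat) : (1 < p)%nat -> #|{: 'cV['Z_p]_k}| = (p ^ k)%nat.
Proof. by move=> p_gt1; rewrite card_mx muln1 card_ord Zp_cast // expn_pow. Qed.

Lemma INR_sum (I : finType) (F : I -> nat) :
  INR (\sum_(i : I) F i) = \big[Rplus/0]_(i : I) INR (F i).
Proof. by apply: (big_morph INR) => // a b; apply: plus_INR. Qed.

Lemma E_theta_count (p l n : nat) (gamma : R) (A : ('I_n -> R) -> Prop) :
  (1 < p)%nat -> 0 < gamma ->
  E_theta p l n gamma A =
    INR #|[pred v | holds (A (embed p n gamma v))]| / INR (p ^ l).
Proof.
move=> p_gt1 gamma_gt0; set Q := [pred v | _].
have thetaE (Hc : 'M['Z_p]_(l, n) * 'cV['Z_p]_l) :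
    theta p l n gamma Hc.1 Hc.2 A = INR #|[pred v | (mulmx Hc.1 v == Hc.2) && Q v]|.
  by rewrite /theta (card_set_image (embed_inj p n gamma gamma_gt0)
                      (Lambda_oE p l n gamma Hc.1 Hc.2 A)).
rewrite /E_theta /fsum (eq_bigr _ (fun Hc _ => thetaE Hc)) -INR_sum.
rewrite (sum_card_fibres _ _ _ mulmx) card_prod card_Zp_cV //.
have M_gt0 : 0 < INR #|{: 'M['Z_p]_(l, n)}|.
  by apply/lt_0_INR/ltP/card_gt0P; exists (const_mx (ord0 : 'Z_p)).
have pl_gt0 : 0 < INR (p ^ l) by rewrite pow_INR; apply/pow_lt/lt_0_INR/ltP; lia.
have cancel_M a b q : 0 < a -> 0 < b -> / (a * b) * (q * a) = q / b.
  by move=> a_gt0 b_gt0; field; lra.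
rewrite !mult_INR; exact: cancel_M.
Qed.

Lemma Pr_unif_Sprime_count (p n m : nat) (gamma : R) (A : ('I_n -> R) -> Prop) :
  0 < gamma -> (1 < p)%nat -> p = (2 * m + 1)%nat ->
  Pr_unif_Sprime p n gamma A =
    INR #|[pred v | holds (A (embed p n gamma v))]| / INR (p ^ n).
Proof.
move=> gamma_gt0 p_gt1 p_odd.
have S'E := SprimeE p n m gamma gamma_gt0 p_gt1 p_odd.
have embed_injective := embed_inj p n gamma gamma_gt0.
rewrite /Pr_unif_Sprime
  (card_set_image embed_injective (Q := [pred v | holds (A (embed p n gamma v))]));
  last first.
  move=> z; rewrite S'E; split.
  - by case=> [[v ->] Az]; exists v => //; apply/holdsP.
  - by case=> v /holdsP Av ->; split => //; exists v.
rewrite (card_set_image embed_injective (Q := predT)); last first.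
  by move=> z; rewrite S'E; split=> [[v ->]|[v _ ->]]; exists v.
by rewrite -(card_Zp_cV p n p_gt1) cardT.
Qed.

Lemma E_theta_eq (p l n m : nat) (gamma : R) (A : ('I_n -> R) -> Prop) :
  0 < gamma -> (1 < p)%nat -> p = (2 * m + 1)%nat ->
  E_theta p l n gamma A =
    powerRZ (INR p) (Z.of_nat n - Z.of_nat l) * Pr_unif_Sprime p n gamma A.
Proof.
move=> gamma_gt0 p_gt1 p_odd.
rewrite (E_theta_count p l n gamma A p_gt1 gamma_gt0).
rewrite (Pr_unif_Sprime_count p n m gamma A gamma_gt0 p_gt1 p_odd).
have pR_gt0 : 0 < INR p by apply/lt_0_INR/ltP; lia.
have pn_pl : INR (p ^ n) = powerRZ (INR p) (Z.of_nat n - Z.of_nat l) * INR (p ^ l).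
  by rewrite !pow_INR !pow_powerRZ -powerRZ_add ?Z.sub_add //; lra.
have pl_gt0 : 0 < INR (p ^ l) by rewrite pow_INR; apply: pow_lt.
have pnl_gt0 := powerRZ_lt _ (Z.of_nat n - Z.of_nat l) pR_gt0.
rewrite pn_pl; field; lra.
Qed.

Theorem mainTheorem14 (p l n : nat) (gamma eps : R) (P_XU : (R2 -> Prop) -> R)
  (x : 'I_n -> R) :
  prime p -> p <> 2%nat -> (0 < n)%nat -> 0 < gamma -> 0 < eps ->
  prob_measure2 P_XU ->
  (* U^ takes values in gamma({0,...,p-1} - (p-1)/2) *)
  P_XU (fun z => exists k : 'I_p, snd z = gamma * (INR (nat_of_ord k) - (INR p - 1) / 2)) = 1 ->
  let A := typset n P_XU eps x in
  let pnl := powerRZ (INR p) (Z.of_nat n - Z.of_nat l) in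
  (1 - / pnl) * pnl * Pr_unif_Sprime p n gamma A <= E_theta p l n gamma A /\
  E_theta p l n gamma A <=
    pnl * Pr_unif_Sprime p n gamma A
    + 2 ^ l / powerRZ (INR p) (Z.of_nat n * (Z.of_nat l - 1)).
Proof.
move=> p_prime p_neq2 _ gamma_gt0 _ _ _ A pnl.
have p_gt1 := prime_gt1 p_prime.
have [m p_odd] := odd_prime_half p p_prime p_neq2.
have pR_gt0 : 0 < INR p by apply/lt_0_INR/ltP; lia.
have pnl_gt0 : 0 < pnl by apply: powerRZ_lt.
have Pr_ge0 : 0 <= Pr_unif_Sprime p n gamma A.
  rewrite (Pr_unif_Sprime_count p n m gamma A gamma_gt0 p_gt1 p_odd) pow_INR.
  by apply/Rmult_le_pos/Rlt_le/Rinv_0_lt_compat/pow_lt => //; apply: pos_INR.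
have slack_ge0 : 0 <= 2 ^ l / powerRZ (INR p) (Z.of_nat n * (Z.of_nat l - 1)).
  by apply/Rmult_le_pos/Rlt_le/Rinv_0_lt_compat/powerRZ_lt => //; apply/pow_le; lra.
rewrite (E_theta_eq p l n m gamma A gamma_gt0 p_gt1 p_odd) -/pnl.
have -> : (1 - / pnl) * pnl = pnl - 1 by field; lra.
split; nra.
Qed.
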